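(* Let $L,R$ be nonempty subsets of a group $G$ such that $\mathcal{W}(L)$ and $\mathcal{W}(R)$ are subgroups of $G$. Then $2\mathrm{S}(G;L,R)$ is strongly connected if and only if $G=\mathcal{W}(L)\mathcal{W}(R)$ and some element of $\bar{L}$ or of $\bar{R}$ is strongly connected to $e$.
   Context: For nonempty subsets $L,R$ of a group $G$, the two-sided group digraph $2\mathrm{S}(G;L,R)$ has vertex set $G$ and a directed arc $(g,h)$ if and only if $h=l^{-1}gr$ for some $l\in L$, $r\in R$. Write $\bar{L}=L\cup L^{-1}$, $\bar{R}=R\cup R^{-1}$. For nonempty $S$, $\mathcal{W}(S)$ is the set of elements expressible as finite products $s_1\cdots s_n$, $n\ge1$, $s_i\in S$. Vertex $g$ is strongly connected to $h$ if there are directed paths from $g$ to $h$ and from $h$ to $g$; the digraph is strongly connected if every pair of vertices is strongly connected. *)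

From Stdlib Require Import Relations.

Record Group := {
  carrier :> Type;
  gmul : carrier -> carrier -> carrier;
  gone : carrier;
  ginv : carrier -> carrier;
  gmul_assoc : forall x y z, gmul x (gmul y z) = gmul (gmul x y) z;
  gmul_1l : forall x, gmul gone x = x;
  gmul_1r : forall x, gmul x gone = x;
  gmul_Vl : forall x, gmul (ginv x) x = gone;
  gmul_Vr : forall x, gmul x (ginv x) = gone
}.

Arguments gmul {g}.
Arguments gone {g}.
Arguments ginv {g}.

Section Defs.
Variable G : Group.

Definition nonempty (S : G -> Prop) : Prop := exists x, S x.

Definition bar (S : G -> Prop) : G -> Prop := fun x => S x \/ S (ginv x).

Inductive W (S : G -> Prop) : G -> Prop :=
| W_base : forall s, S s -> W S s
| W_step : forall x s, W S x -> S s -> W S (gmul x s).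

Definition is_subgroup (H : G -> Prop) : Prop :=
  H gone /\ (forall x y, H x -> H y -> H (gmul x y)) /\
  (forall x, H x -> H (ginv x)).

Definition arc2S (L R : G -> Prop) (g h : G) : Prop :=
  exists l r, L l /\ R r /\ h = gmul (gmul (ginv l) g) r.

Definition dpath (L R : G -> Prop) : relation G :=
  clos_refl_trans G (arc2S L R).

Definition strongly_connected_to (L R : G -> Prop) (g h : G) : Prop :=
  dpath L R g h /\ dpath L R h g.

Definition strongly_connected_2S (L R : G -> Prop) : Prop :=
  forall g h : G, strongly_connected_to L R g h.

Definition is_product_of (A B : G -> Prop) : Prop :=
  forall g : G, exists a b, A a /\ B b /\ g = gmul a b.

End Defs.

(* A directed path of length k from g ends at a^-1 g b, where a and b are
   products of k elements of L and of R respectively.  Hence strong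
   connectivity forces G = W(L)W(R).  Conversely, an element x of bar L or
   bar R strongly connected to e produces an element w that is a product of
   q+1 elements of one of L, R and of q elements of the other.  Multiplying
   by powers of w equalises the word lengths of any a in W(L) and b in W(R),
   and equal lengths are exactly what a path from e to a b, or back, needs. *)

From Stdlib Require Import Relations Lia Arith.

Section GroupFacts.
Variable G : Group.

Lemma inv_uniq (x y : G) : gmul x y = gone -> y = ginv x.
Proof.
  intro H.
  rewrite <- (gmul_1l G y), <- (gmul_Vl G x), <- gmul_assoc, H, gmul_1r.
  reflexivity.
Qed.

Lemma invgK (x : G) : ginv (ginv x) = x.
Proof. symmetry. apply inv_uniq, gmul_Vl. Qed.

Lemma invg1 : ginv (@gone G) = gone.
Proof. symmetry. apply inv_uniq, gmul_1l. Qed.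

Lemma mulKg (x y : G) : gmul (ginv x) (gmul x y) = y.
Proof. rewrite gmul_assoc, gmul_Vl, gmul_1l. reflexivity. Qed.

Lemma mulKVg (x y : G) : gmul x (gmul (ginv x) y) = y.
Proof. rewrite gmul_assoc, gmul_Vr, gmul_1l. reflexivity. Qed.

Lemma mulgK (x y : G) : gmul (gmul y x) (ginv x) = y.
Proof. rewrite <- gmul_assoc, gmul_Vr, gmul_1r. reflexivity. Qed.

Lemma invMg (x y : G) : ginv (gmul x y) = gmul (ginv y) (ginv x).
Proof.
  symmetry. apply inv_uniq.
  rewrite <- gmul_assoc, mulKVg, gmul_Vr. reflexivity.
Qed.

Fixpoint gpow (w : G) (t : nat) : G :=
  match t with 0 => gone | S t => gmul w (gpow w t) end.

Lemma gpow1 (t : nat) : gpow gone t = gone.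
Proof. induction t as [|t IH]; simpl; [|rewrite IH, gmul_1l]; reflexivity. Qed.

End GroupFacts.

Section Words.
Variable G : Group.
Implicit Types (A : G -> Prop) (x y : G).

(* Unlike [W A], the empty product [gone] is allowed (length 0). *)
Inductive Wn A : nat -> G -> Prop :=
| Wn0 : Wn A 0 gone
| WnS : forall k x a, Wn A k x -> A a -> Wn A (S k) (gmul x a).

Lemma Wn1 A a : A a -> Wn A 1 a.
Proof. intro Ha. rewrite <- (gmul_1l G a). now constructor; [constructor|]. Qed.

Lemma Wn_mul A i j x y : Wn A i x -> Wn A j y -> Wn A (i + j) (gmul x y).
Proof.
  intros Hx Hy. induction Hy as [|j y a _ IH Ha].
  - rewrite gmul_1r, Nat.add_0_r. exact Hx.
  - rewrite gmul_assoc, Nat.add_succ_r. now constructor.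
Qed.

Lemma Wn_mull A k a x : A a -> Wn A k x -> Wn A (S k) (gmul a x).
Proof. intros Ha Hx. exact (Wn_mul A 1 k a x (Wn1 A a Ha) Hx). Qed.

Lemma Wn_gpow A p w t : Wn A p w -> Wn A (p * t) (gpow G w t).
Proof.
  intro Hw. induction t as [|t IH]; simpl.
  - rewrite Nat.mul_0_r. constructor.
  - rewrite Nat.mul_succ_r, Nat.add_comm. now apply Wn_mul.
Qed.

Lemma Wn_pad A j n t x :
  Wn A (S n) gone -> Wn A j x -> Wn A (j + S n * t) x.
Proof.
  intros He Hx.
  pose proof (Wn_mul A _ _ x _ Hx (Wn_gpow A _ gone t He)) as Hxe.
  now rewrite gpow1, gmul_1r in Hxe.
Qed.

Lemma W_Wn A x : W G A x -> exists k, Wn A (S k) x.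
Proof.
  intro Hx. induction Hx as [a Ha | x a _ [k Hk] Ha].
  - exists 0. now apply Wn1.
  - exists (S k). now constructor.
Qed.

Lemma Wn_W A k x : is_subgroup G (W G A) -> Wn A k x -> W G A x.
Proof.
  intros [H1 _] Hx. induction Hx as [|k x a _ IH Ha].
  - exact H1.
  - now apply W_step.
Qed.

End Words.

Arguments Wn {G}.

Section Digraph.
Variable G : Group.
Implicit Types (L R A B : G -> Prop) (a b c g h x w : G).

Definition balanced A B a b : Prop := exists k, Wn A k a /\ Wn B k b.

Definition excess A B : Prop := exists w q, Wn A (S q) w /\ Wn B q w.

Lemma balanced_sym A B a b : balanced A B a b -> balanced B A b a.
Proof. intros [k [Ha Hb]]. now exists k. Qed.

Lemma dpath_balanced L R g h :
  dpath G L R g h <->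
  exists a b, balanced L R a b /\ h = gmul (gmul (ginv a) g) b.
Proof.
  split.
  - intro Hp. induction Hp as [g h [l [r [Hl [Hr ->]]]] | g | g h k _ IH1 _ IH2].
    + exists l, r. split; [exists 1; split; now apply Wn1 | reflexivity].
    + exists gone, gone. split; [exists 0; split; constructor |].
      rewrite invg1, gmul_1l, gmul_1r. reflexivity.
    + destruct IH1 as [a1 [b1 [[k1 [Ha1 Hb1]] ->]]].
      destruct IH2 as [a2 [b2 [[k2 [Ha2 Hb2]] ->]]].
      exists (gmul a1 a2), (gmul b1 b2).
      split; [exists (k1 + k2); split; now apply Wn_mul |].
      rewrite invMg, !gmul_assoc. reflexivity.
  - intros [a [b [[k [Ha Hb]] ->]]]. revert b Hb.
    induction Ha as [| k a l _ IH Hl]; intros b Hb;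
      inversion Hb as [| k' b' r Hb' Hr]; subst.
    + rewrite invg1, gmul_1l, gmul_1r. apply rt_refl.
    + eapply rt_trans; [exact (IH b' Hb') |].
      apply rt_step. exists l, r. repeat split; try assumption.
      rewrite invMg, !gmul_assoc. reflexivity.
Qed.

Lemma dpath_inv L R g h : dpath G L R g h -> dpath G R L (ginv g) (ginv h).
Proof.
  intro Hp. induction Hp as [g h [l [r [Hl [Hr ->]]]] | g | g h k _ IH1 _ IH2].
  - apply rt_step. exists r, l. repeat split; try assumption.
    rewrite !invMg, invgK, gmul_assoc. reflexivity.
  - apply rt_refl.
  - eapply rt_trans; eassumption.
Qed.

Lemma excess_of_dpath_from1 L R x : L x -> dpath G L R gone x -> excess L R.
Proof.
  intros Hx Hp. apply dpath_balanced in Hp as [a [b [[k [Ha Hb]] Hxab]]].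
  exists b, k. split; [|exact Hb].
  replace b with (gmul a x) by (rewrite Hxab, gmul_1r; apply mulKVg).
  now constructor.
Qed.

Lemma excess_of_dpath_to1 L R x : L (ginv x) -> dpath G L R x gone -> excess L R.
Proof.
  intros Hx Hp. apply dpath_balanced in Hp as [a [b [[k [Ha Hb]] Hxab]]].
  exists b, k. split; [|exact Hb].
  replace b with (gmul (ginv x) a); [now apply Wn_mull |].
  apply (f_equal (gmul a)) in Hxab.
  rewrite gmul_1r, <- !gmul_assoc, mulKVg in Hxab.
  rewrite Hxab. apply mulKg.
Qed.

Lemma excess_of_bar L R x :
  bar G L x \/ bar G R x -> strongly_connected_to G L R x gone ->
  excess L R \/ excess R L.
Proof.
  intros Hx [Hto Hfrom].
  destruct Hx as [[Hx | Hx] | [Hx | Hx]].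
  - left. exact (excess_of_dpath_from1 L R x Hx Hfrom).
  - left. exact (excess_of_dpath_to1 L R x Hx Hto).
  - right. apply (excess_of_dpath_to1 R L (ginv x)); [now rewrite invgK |].
    rewrite <- invg1. now apply dpath_inv.
  - right. apply (excess_of_dpath_from1 R L (ginv x)); [exact Hx |].
    rewrite <- invg1. now apply dpath_inv.
Qed.

(* With [w] one letter longer over [A] than over [B], the power [w^t] shifts
   the length difference of a pair by [t]; [b] is first padded by words for
   [gone] so that the difference to absorb is nonnegative. *)
Lemma balance_by_excess A B a b :
  excess A B -> W G B gone -> W G A a -> W G B b ->
  exists c, balanced A B (gmul c a) (gmul c b) /\
            balanced A B (gmul a c) (gmul b c).
Proof.
  intros [w [q [HwA HwB]]] He Ha Hb.
  destruct (W_Wn G B _ He) as [n Hn].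
  destruct (W_Wn G A _ Ha) as [i Hi].
  destruct (W_Wn G B _ Hb) as [j Hj].
  set (j' := S j + S n * S i).
  assert (Hb' : Wn B j' b) by now apply Wn_pad.
  set (t := j' - S i).
  pose proof (Wn_gpow G A _ w t HwA) as HcA.
  pose proof (Wn_gpow G B _ w t HwB) as HcB.
  assert (Hlen : S q * t + S i = q * t + j') by (subst t j'; simpl; lia).
  exists (gpow G w t). split.
  - exists (S q * t + S i). split; [now apply Wn_mul |].
    rewrite Hlen. now apply Wn_mul.
  - exists (S i + S q * t). split; [now apply Wn_mul |].
    replace (S i + S q * t) with (j' + q * t) by lia. now apply Wn_mul.
Qed.

Section Connect.
Variables L R : G -> Prop.
Hypothesis HL : is_subgroup G (W G L).
Hypothesis HR : is_subgroup G (W G R).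
Hypothesis Hexcess : excess L R \/ excess R L.

Lemma balance_W a b :
  W G L a -> W G R b ->
  exists c, balanced L R (gmul c a) (gmul c b) /\
            balanced L R (gmul a c) (gmul b c).
Proof.
  intros Ha Hb. destruct Hexcess as [HLR | HRL].
  - exact (balance_by_excess L R a b HLR (proj1 HR) Ha Hb).
  - destruct (balance_by_excess R L b a HRL (proj1 HL) Hb Ha)
      as [c [Hl Hr]].
    exists c. split; now apply balanced_sym.
Qed.

Lemma dpath_from1_mul a b : W G L a -> W G R b -> dpath G L R gone (gmul a b).
Proof.
  intros Ha Hb.
  destruct (balance_W (ginv a) b (proj2 (proj2 HL) a Ha) Hb) as [c [Hbal _]].
  apply dpath_balanced. exists (gmul c (ginv a)), (gmul c b).
  split; [exact Hbal |].
  rewrite gmul_1r, invMg, invgK, <- gmul_assoc, mulKg. reflexivity.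
Qed.

Lemma dpath_mul_to1 a b : W G L a -> W G R b -> dpath G L R (gmul a b) gone.
Proof.
  intros Ha Hb.
  destruct (balance_W a (ginv b) Ha (proj2 (proj2 HR) b Hb)) as [c [_ Hbal]].
  apply dpath_balanced. exists (gmul a c), (gmul (ginv b) c).
  split; [exact Hbal |].
  rewrite invMg, <- (gmul_assoc G (ginv c)), mulKg, gmul_assoc, mulgK, gmul_Vl.
  reflexivity.
Qed.

End Connect.

End Digraph.

Theorem mainTheorem12 (G : Group) (L R : G -> Prop) :
  nonempty G L -> nonempty G R ->
  is_subgroup G (W G L) -> is_subgroup G (W G R) ->
  (strongly_connected_2S G L R <->
   (is_product_of G (W G L) (W G R) /\
    exists x, (bar G L x \/ bar G R x) /\ strongly_connected_to G L R x gone)).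
Proof.
  intros [l0 Hl0] _ HL HR. split.
  - intro Hsc. split.
    + intro g. destruct (Hsc gone g) as [Hp _].
      apply dpath_balanced in Hp as [a [b [[k [Ha Hb]] ->]]].
      exists (ginv a), b. repeat split.
      * apply (proj2 (proj2 HL)). now apply (Wn_W G L k).
      * now apply (Wn_W G R k).
      * now rewrite gmul_1r.
    + exists l0. split; [left; left; exact Hl0 | apply Hsc].
  - intros [Hprod [x [Hx Hxe]]].
    pose proof (excess_of_bar G L R x Hx Hxe) as Hexcess.
    assert (Hone : forall g, dpath G L R g gone /\ dpath G L R gone g).
    { intro g. destruct (Hprod g) as [a [b [Ha [Hb ->]]]].
      split; [apply dpath_mul_to1 | apply dpath_from1_mul]; assumption. }
    intros g h. split; eapply rt_trans; apply Hone.
Qed.
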